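(* Let $[\mathbf{K}_0]=\{[\mathbf{K}_0(\mathbf{x})],\mathbf{x}\in D\}$ be any random field in $\mathcal{C}^+_n$ and let $[\mathbf{K}]$ be defined for all $\mathbf{x}\in D$ by $$[\mathbf{K}(\mathbf{x})]=\frac{1}{1+\varepsilon}[\underline L(\mathbf{x})]^T\{\varepsilon[I_n]+[\mathbf{K}_0(\mathbf{x})]\}[\underline L(\mathbf{x})].$$ Then: (i) for all $\mathbf{x}\in D$, $\|\mathbf{K}(\mathbf{x})\|_F\le \frac{\underline k_1}{1+\varepsilon}(\sqrt{n}\,\varepsilon+\|\mathbf{K}_0(\mathbf{x})\|_F)$ almost surely; (ii) for all $\mathbf{z}\in\mathbb{R}^n$ and all $\mathbf{x}\in D$, $\underline k_\varepsilon\|\mathbf{z}\|_2^2\le\langle[\mathbf{K}(\mathbf{x})]\mathbf{z},\mathbf{z}\rangle_2$ almost surely, where $\underline k_\varepsilon=\underline k_0\,\varepsilon/(1+\varepsilon)$ is a positive constant independent of $\mathbf{x}$; (iii) for all $\mathbf{x}\in D$, $\|[\mathbf{K}(\mathbf{x})]^{-1}\|_F\le\frac{\sqrt{n}(1+\varepsilon)}{\varepsilon}\,\mathrm{tr}([\underline K(\mathbf{x})]^{-1})$ almost surely; consequently, for every integer $p\ge1$ and all $\mathbf{x}\in D$, $E\{\|[\mathbf{K}(\mathbf{x})]^{-1}\|_F^p\}<+\infty$ (in particular $\{[\mathbf{K}(\mathbf{x})]^{-1},\mathbf{x}\in D\}$ is a second-order random field).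
   Context: Let $d\ge1$, $n\ge1$ be integers and $D\subset\mathbb{R}^d$ a bounded open domain. $\mathbb{M}_n^+(\mathbb{R})$ denotes the set of symmetric positive-definite real $n\times n$ matrices, $\|\cdot\|_F$ the Frobenius norm, $\|\cdot\|_2$ and $\langle\cdot,\cdot\rangle_2$ the Euclidean norm and inner product, $[I_n]$ the identity matrix. $\mathcal{C}^+_n$ is the set of all random fields $\{[\mathbf{K}(\mathbf{x})],\mathbf{x}\in D\}$ defined on a probability space $(\Theta,\mathcal{T},\mathcal{P})$ with values in $\mathbb{M}_n^+(\mathbb{R})$. Let $\mathbf{x}\mapsto[\underline K(\mathbf{x})]$ be a function from $D$ into $\mathbb{M}_n^+(\mathbb{R})$ such that for all $\mathbf{x}\in D$ and $\mathbf{z}\in\mathbb{R}^n$, $\underline k_0\|\mathbf{z}\|_2^2\le\langle[\underline K(\mathbf{x})]\mathbf{z},\mathbf{z}\rangle_2\le n^{-1/2}\widetilde{\underline k}_1\|\mathbf{z}\|_2^2$, with constants $0<\underline k_0<\widetilde{\underline k}_1<+\infty$ independent of $\mathbf{x}$; set $\underline k_1=n\,\widetilde{\underline k}_1$. $[\underline L(\mathbf{x})]$ is the upper triangular real matrix with $[\underline K(\mathbf{x})]=[\underline L(\mathbf{x})]^T[\underline L(\mathbf{x})]$. $\varepsilon>0$ is a fixed real number. *)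

From HB Require Import structures.
From mathcomp Require Import all_boot all_order all_algebra.
From mathcomp Require Import all_classical all_reals all_analysis.
Set Implicit Arguments. Unset Strict Implicit. Unset Printing Implicit Defensive.
Import Order.TTheory GRing.Theory Num.Theory numFieldNormedType.Exports.
Local Open Scope ring_scope.

Definition dotv (R : realType) (n : nat) (u v : 'cV[R]_n) : R :=
  \sum_(i < n) u i 0 * v i 0.

Definition norm2sq (R : realType) (n : nat) (z : 'cV[R]_n) : R := dotv z z.

Definition frob (R : realType) (m n : nat) (A : 'M[R]_(m, n)) : R :=
  Num.sqrt (\sum_(i < m) \sum_(j < n) A i j ^+ 2).

Definition spd (R : realType) (n : nat) (A : 'M[R]_n) : Prop :=
  A^T = A /\ forall z : 'cV[R]_n, z != 0 -> 0 < dotv (A *m z) z.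

Definition upper_trig (R : realType) (n : nat) (A : 'M[R]_n) : Prop :=
  forall i j : 'I_n, (j < i)%N -> A i j = 0.

Definition random_field_spd (R : realType) (d n : nat)
  (dT : measure_display) (T : measurableType dT)
  (D : set 'rV[R]_d) (K : 'rV[R]_d -> T -> 'M[R]_n) : Prop :=
  forall x, D x ->
    (forall i j : 'I_n, measurable_fun setT (fun th => K x th i j)) /\
    (forall th, spd (K x th)).

Definition Kfield (R : realType) (d n : nat) (T : Type) (eps : R)
  (L : 'rV[R]_d -> 'M[R]_n) (K0 : 'rV[R]_d -> T -> 'M[R]_n)
  (x : 'rV[R]_d) (th : T) : 'M[R]_n :=
  (1 + eps)^-1 *: ((L x)^T *m (eps%:M + K0 x th) *m L x).

From HB Require Import structures.
From mathcomp Require Import all_boot all_order all_algebra.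
From mathcomp Require Import all_classical all_reals all_analysis.
From mathcomp Require Import ring lra.
Import Order.TTheory GRing.Theory Num.Theory numFieldNormedType.Exports.

(* Write [Kbar = L^T L]. The quadratic form of [K] is
   [(eps z^T Kbar z + (L z)^T K0 (L z)) / (1 + eps)], so positivity of [K0]
   makes [K] dominate [eps / (1 + eps) Kbar]; this is (ii). Inversion reverses
   the Loewner order, hence [K^-1 <= (1 + eps) / eps Kbar^-1], and (iii) follows
   by taking traces, since [||A||_F <= tr A] for positive [A]. For (i), the
   Frobenius norm is submultiplicative and [||L||_F^2 = tr Kbar <= k1]. The
   bound in (iii) is deterministic, so all moments of [||K^-1||_F] are finite. *)

Set Implicit Arguments. Unset Strict Implicit. Unset Printing Implicit Defensive.
Local Open Scope ring_scope.

Section FrobeniusNorm.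
Variable R : realType.

Lemma sum_mul_sqr_le (I : finType) (a b : I -> R) :
  (\sum_i a i * b i) ^+ 2 <= (\sum_i a i ^+ 2) * (\sum_i b i ^+ 2).
Proof.
have lagrange : \sum_i \sum_j (a i * b j - a j * b i) ^+ 2 =
    2 * ((\sum_i a i ^+ 2) * (\sum_i b i ^+ 2) - (\sum_i a i * b i) ^+ 2).
  transitivity (\sum_i \sum_j (a i ^+ 2 * b j ^+ 2) + \sum_i \sum_j (a j ^+ 2 * b i ^+ 2)
      - 2 * \sum_i \sum_j ((a i * b i) * (a j * b j))).
    rewrite mulr_sumr -big_split -sumrB; apply: eq_bigr => i _ /=.
    rewrite mulr_sumr -big_split -sumrB; apply: eq_bigr => j _ /=.
    rewrite sqrrB !exprMn; ring.
  rewrite [\sum_i \sum_j (a j ^+ 2 * _)]exchange_big /= -!big_distrlr /= expr2; ring.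
have : 0 <= \sum_i \sum_j (a i * b j - a j * b i) ^+ 2.
  by apply: sumr_ge0 => i _; apply: sumr_ge0 => j _; exact: sqr_ge0.
by rewrite lagrange pmulr_rge0 // subr_ge0.
Qed.

Lemma sqrtr_le (u v : R) : 0 <= v -> u <= v ^+ 2 -> Num.sqrt u <= v.
Proof. by move=> v0 uv; rewrite -(ger0_norm v0) -sqrtr_sqr ler_sqrt // sqr_ge0. Qed.

Definition frob2 m k (A : 'M[R]_(m, k)) := \sum_(p : 'I_m * 'I_k) A p.1 p.2 ^+ 2.

Lemma frobE m k (A : 'M[R]_(m, k)) : frob A = Num.sqrt (frob2 A).
Proof. by rewrite /frob /frob2 pair_bigA. Qed.

Lemma frob2_ge0 m k (A : 'M[R]_(m, k)) : 0 <= frob2 A.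
Proof. by apply: sumr_ge0 => p _; exact: sqr_ge0. Qed.

Lemma frob_ge0 m k (A : 'M[R]_(m, k)) : 0 <= frob A.
Proof. by rewrite frobE sqrtr_ge0. Qed.

Lemma sqr_frob m k (A : 'M[R]_(m, k)) : frob A ^+ 2 = frob2 A.
Proof. by rewrite frobE sqr_sqrtr // frob2_ge0. Qed.

Lemma frobD m k (A B : 'M[R]_(m, k)) : frob (A + B) <= frob A + frob B.
Proof.
rewrite [frob (A + B)]frobE; apply: sqrtr_le; first by rewrite addr_ge0 ?frob_ge0.
pose s := \sum_(p : 'I_m * 'I_k) A p.1 p.2 * B p.1 p.2.
have s_le : s <= frob A * frob B.
  apply: le_trans (ler_norm _) _.
  rewrite -sqrtr_sqr !frobE -sqrtrM ?frob2_ge0 // ler_sqrt; last first.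
    by rewrite mulr_ge0 ?frob2_ge0.
  exact: sum_mul_sqr_le.
have -> : frob2 (A + B) = frob2 A + frob2 B + 2 * s.
  rewrite /frob2 /s mulr_sumr -!big_split /=; apply: eq_bigr => p _.
  by rewrite !mxE sqrrD; ring.
rewrite sqrrD -!sqr_frob mulr_natl mulr2n [_ *+ 2]mulr2n; lra.
Qed.

Lemma frobM m k l (A : 'M[R]_(m, k)) (B : 'M[R]_(k, l)) :
  frob (A *m B) <= frob A * frob B.
Proof.
rewrite !frobE -sqrtrM ?frob2_ge0 // ler_sqrt; last by rewrite mulr_ge0 ?frob2_ge0.
have -> : frob2 A * frob2 B =
    \sum_(p : 'I_m * 'I_l) (\sum_j A p.1 j ^+ 2) * (\sum_j B j p.2 ^+ 2).
  rewrite /frob2 -(pair_bigA _ (fun i j => A i j ^+ 2)).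
  rewrite -(pair_bigA _ (fun i j => B i j ^+ 2)).
  rewrite -(pair_bigA _ (fun i j => (\sum_k0 A i k0 ^+ 2) * (\sum_k0 B k0 j ^+ 2))).
  by rewrite [X in _ * X]exchange_big big_distrlr.
by apply: ler_sum => p _; rewrite mxE; exact: sum_mul_sqr_le.
Qed.

Lemma frobZ m k (c : R) (A : 'M[R]_(m, k)) : frob (c *: A) = `|c| * frob A.
Proof.
rewrite !frobE -sqrtr_sqr -sqrtrM ?sqr_ge0 //; congr Num.sqrt.
by rewrite /frob2 mulr_sumr; apply: eq_bigr => p _; rewrite mxE exprMn.
Qed.

Lemma frob_tr m k (A : 'M[R]_(m, k)) : frob A^T = frob A.
Proof.
rewrite /frob exchange_big /=; congr Num.sqrt.
by apply: eq_bigr => i _; apply: eq_bigr => j _; rewrite mxE.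
Qed.

Lemma frob1 k : frob (1%:M : 'M[R]_k) = Num.sqrt k%:R.
Proof.
rewrite /frob; congr Num.sqrt.
transitivity (\sum_(i < k) (1 : R)); last by rewrite sumr_const card_ord.
apply: eq_bigr => i _; rewrite (bigD1 i) //= big1 ?mxE ?eqxx ?addr0 ?expr1n //.
by move=> j /negbTE ji; rewrite mxE eq_sym ji expr0n.
Qed.

Lemma frob_scalar_mx k (c : R) : frob (c%:M : 'M[R]_k) = `|c| * Num.sqrt k%:R.
Proof. by rewrite -[c%:M]mulmx1 mul_scalar_mx frobZ frob1. Qed.

Lemma sqr_frob_trace m k (A : 'M[R]_(m, k)) : frob A ^+ 2 = \tr (A^T *m A).
Proof.
rewrite sqr_frob /frob2 /mxtrace -(pair_bigA _ (fun i j => A i j ^+ 2)) exchange_big /=.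
by apply: eq_bigr => i _; rewrite mxE; apply: eq_bigr => j _; rewrite mxE expr2.
Qed.

End FrobeniusNorm.

Section QuadraticForms.
Variables (R : realType) (k : nat).
Implicit Types (u v w z : 'cV[R]_k) (A B : 'M[R]_k).

Lemma dotvE u v : dotv u v = (u^T *m v) 0 0.
Proof. by rewrite /dotv mxE; apply: eq_bigr => i _; rewrite mxE. Qed.

Lemma dotvC u v : dotv u v = dotv v u.
Proof. by rewrite /dotv; apply: eq_bigr => i _; rewrite mulrC. Qed.

Lemma dotv_mulmxl A u v : dotv (A *m u) v = dotv u (A^T *m v).
Proof. by rewrite !dotvE trmx_mul mulmxA. Qed.

Lemma dotvDl u w v : dotv (u + w) v = dotv u v + dotv w v.
Proof. by rewrite /dotv -big_split; apply: eq_bigr => i _; rewrite mxE mulrDl. Qed.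

Lemma dotvZl c u v : dotv (c *: u) v = c * dotv u v.
Proof. by rewrite /dotv mulr_sumr; apply: eq_bigr => i _; rewrite mxE mulrA. Qed.

Lemma dotvNl u v : dotv (- u) v = - dotv u v.
Proof. by rewrite -scaleN1r dotvZl mulN1r. Qed.

Lemma dotvDr u w v : dotv v (u + w) = dotv v u + dotv v w.
Proof. by rewrite dotvC dotvDl !(dotvC v). Qed.

Lemma dotvZr c u v : dotv v (c *: u) = c * dotv v u.
Proof. by rewrite dotvC dotvZl dotvC. Qed.

Lemma dotvNr u v : dotv v (- u) = - dotv v u.
Proof. by rewrite dotvC dotvNl dotvC. Qed.

Lemma dotv0l v : dotv 0 v = 0.
Proof. by rewrite /dotv big1 // => i _; rewrite mxE mul0r. Qed.

Lemma dotv_delta u i : dotv u (delta_mx i 0) = u i 0.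
Proof.
rewrite /dotv (bigD1 i) //= big1 ?addr0; first by rewrite mxE !eqxx mulr1.
by move=> j /negbTE ji; rewrite mxE ji mulr0.
Qed.

Lemma dotv_mul_delta A i j : dotv (A *m delta_mx i 0) (delta_mx j 0) = A j i.
Proof. by rewrite dotv_delta -colE mxE. Qed.

Lemma norm2sq_delta i : norm2sq (delta_mx i 0 : 'cV[R]_k) = 1.
Proof. by rewrite /norm2sq dotv_delta mxE !eqxx. Qed.

Lemma mxtrace_dotv A : \tr A = \sum_i dotv (A *m delta_mx i 0) (delta_mx i 0).
Proof. by apply: eq_bigr => i _; rewrite dotv_mul_delta. Qed.

Lemma spd_dotv_ge0 A z : spd A -> 0 <= dotv (A *m z) z.
Proof.
move=> [_ A_pd]; have [->|z_neq0] := eqVneq z 0; last exact/ltW/A_pd.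
by rewrite mulmx0 dotv0l.
Qed.

Lemma spd_mxtrace_ge0 A : spd A -> 0 <= \tr A.
Proof. by move=> A_spd; rewrite mxtrace_dotv sumr_ge0 // => i _; apply: spd_dotv_ge0. Qed.

Lemma delta_mx_neq0 i : delta_mx i 0 != 0 :> 'cV[R]_k.
Proof.
apply/eqP => delta0; have := norm2sq_delta i.
by rewrite delta0 /norm2sq dotv0l => /eqP; rewrite eq_sym oner_eq0.
Qed.

Lemma spd_sqr_le A i j : spd A -> A i j ^+ 2 <= A i i * A j j.
Proof.
move=> A_spd; have Aii_gt0 : 0 < A i i.
  by rewrite -dotv_mul_delta; apply: A_spd.2; exact: delta_mx_neq0.
have Aji : A j i = A i j by rewrite -[in LHS](proj1 A_spd) mxE.
(* the quadratic form at [t e_i + e_j] with [t = - A_ij / A_ii] is [A_jj - A_ij^2 / A_ii] *)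
pose t := - A i j / A i i.
have := spd_dotv_ge0 (t *: delta_mx i 0 + delta_mx j 0) A_spd.
rewrite mulmxDr -scalemxAr !(dotvDl, dotvDr, dotvZl, dotvZr) !dotv_mul_delta Aji.
have -> : t * (t * A i i) + t * A i j + (t * A i j + A j j)
    = (A i i * A j j - A i j ^+ 2) / A i i by rewrite /t; field; rewrite lt0r_neq0.
by rewrite pmulr_lge0 ?invr_gt0 // subr_ge0.
Qed.

Lemma spd_frob_le_trace A : spd A -> frob A <= \tr A.
Proof.
move=> A_spd; rewrite frobE; apply: sqrtr_le; first exact: spd_mxtrace_ge0.
rewrite /frob2 /mxtrace expr2 big_distrlr /= pair_bigA /=.
by apply: ler_sum => p _; exact: spd_sqr_le.
Qed.

Lemma pd_unitmx A : (forall z, z != 0 -> 0 < dotv (A *m z) z) -> A \in unitmx.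
Proof.
move=> A_pd; rewrite unitmxE unitfE; apply/negP => /det0P [v v_neq0 vA].
have := A_pd v^T; rewrite trmx_eq0 dotv_mulmxl -trmx_mul vA trmx0.
by rewrite dotvC dotv0l ltxx => /(_ v_neq0).
Qed.

Lemma spd_unitmx A : spd A -> A \in unitmx.
Proof. by case=> _; exact: pd_unitmx. Qed.

Lemma spd_invmx A : spd A -> spd (invmx A).
Proof.
move=> A_spd; have A_unit := spd_unitmx A_spd.
split; first by rewrite trmx_inv A_spd.1.
move=> z z_neq0; set w := invmx A *m z.
have zE : z = A *m w by rewrite /w mulmxA mulmxV // mul1mx.
have w_neq0 : w != 0 by apply: contraNneq z_neq0 => w0; rewrite zE w0 mulmx0.
by rewrite [X in dotv _ X]zE dotvC; apply: A_spd.2.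
Qed.

Lemma spdZ c A : 0 < c -> spd A -> spd (c *: A).
Proof.
move=> c_gt0 [A_sym A_pd]; split; first by rewrite linearZ /= A_sym.
by move=> z z_neq0; rewrite -scalemxAl dotvZl mulr_gt0 // A_pd.
Qed.

Lemma mxtrace_le A c : (forall z, dotv (A *m z) z <= c * norm2sq z) ->
  \tr A <= k%:R * c.
Proof.
move=> A_le; rewrite mxtrace_dotv mulr_natl -[k in c *+ k]card_ord -sumr_const.
by apply: ler_sum => i _; rewrite -[c]mulr1 -(norm2sq_delta i).
Qed.

Lemma spd_dotv_invmx_le A B : spd B ->
    (forall z, dotv (B *m z) z <= dotv (A *m z) z) ->
  forall z, dotv (invmx A *m z) z <= dotv (invmx B *m z) z.
Proof.
move=> B_spd BleA z.
have A_unit : A \in unitmx.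
  apply: pd_unitmx => y y_neq0; apply: lt_le_trans (BleA y); exact: B_spd.2.
set u := invmx A *m z; set v := invmx B *m z.
have zAu : z = A *m u by rewrite /u mulmxA mulmxV // mul1mx.
have zBv : z = B *m v by rewrite /v mulmxA mulmxV ?spd_unitmx // mul1mx.
have Buv : dotv (B *m u) v = dotv u z by rewrite dotv_mulmxl B_spd.1 -zBv.
have Bu_le : dotv (B *m u) u <= dotv u z.
  by rewrite [X in _ <= dotv _ X]zAu [X in _ <= X]dotvC; exact: BleA.
(* expand [0 <= (u - v)^T B (u - v)] with [B v = z] *)
have := spd_dotv_ge0 (u - v) B_spd.
rewrite mulmxBr !(dotvDl, dotvDr, dotvNl, dotvNr) -zBv Buv (dotvC z u) (dotvC z v).
lra.
Qed.

End QuadraticForms.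

Section RegularizedMatrix.
Variables (R : realType) (k : nat) (eps : R) (L K0 : 'M[R]_k).
Hypothesis eps_gt0 : 0 < eps.

Definition Kmat := (1 + eps)^-1 *: (L^T *m (eps%:M + K0) *m L).

Let c_gt0 : 0 < (1 + eps)^-1 :> R.
Proof. by rewrite invr_gt0 addr_gt0. Qed.

Lemma dotv_Kmat z : dotv (Kmat *m z) z =
  (1 + eps)^-1 * (eps * dotv (L^T *m L *m z) z + dotv (K0 *m (L *m z)) (L *m z)).
Proof.
have dotv_trmx_mul (M : 'M[R]_k) : dotv (L^T *m M *m L *m z) z = dotv (M *m (L *m z)) (L *m z).
  by rewrite -!mulmxA dotv_mulmxl trmxK.
have -> : L^T *m L = L^T *m 1%:M *m L by rewrite mulmx1.
rewrite /Kmat -scalemxAl dotvZl !dotv_trmx_mul mulmxDl.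
by rewrite !mul_scalar_mx scale1r dotvDl dotvZl.
Qed.

Lemma frob_Kmat_le :
  frob Kmat <= (1 + eps)^-1 * (\tr (L^T *m L) * (Num.sqrt k%:R * eps + frob K0)).
Proof.
rewrite /Kmat frobZ gtr0_norm // ler_pM2l // -sqr_frob_trace.
have frob_mid : frob (eps%:M + K0) <= Num.sqrt k%:R * eps + frob K0.
  by apply: le_trans (frobD _ _) _; rewrite frob_scalar_mx gtr0_norm // mulrC.
apply: le_trans (frobM _ _) _; rewrite expr2 -mulrA mulrC.
apply: ler_wpM2l; first exact: frob_ge0.
apply: le_trans (frobM _ _) _; rewrite frob_tr.
by apply: ler_wpM2l; rewrite ?frob_ge0.
Qed.

Hypothesis K0_spd : spd K0.

Lemma Kmat_dotv_ge z :
  eps / (1 + eps) * dotv (L^T *m L *m z) z <= dotv (Kmat *m z) z.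
Proof.
rewrite dotv_Kmat mulrDr [eps / _]mulrC -mulrA lerDl.
by rewrite mulr_ge0 ?spd_dotv_ge0 ?ltW.
Qed.

Hypothesis Kb_spd : spd (L^T *m L).

Lemma Kmat_spd : spd Kmat.
Proof.
split.
  rewrite /Kmat linearZ /= !trmx_mul trmxK linearD /= tr_scalar_mx K0_spd.1.
  by rewrite mulmxA.
move=> z z_neq0; apply: lt_le_trans (Kmat_dotv_ge z).
by rewrite mulr_gt0 ?divr_gt0 ?addr_gt0 // Kb_spd.2.
Qed.

Lemma mxtrace_invmx_Kmat_le :
  \tr (invmx Kmat) <= (1 + eps) / eps * \tr (invmx (L^T *m L)).
Proof.
(* [Kmat] dominates [eps / (1 + eps) Kb] as a quadratic form, and inversion reverses this *)
have epsc_gt0 : 0 < eps / (1 + eps) by rewrite divr_gt0 ?addr_gt0.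
have dom z : dotv (eps / (1 + eps) *: (L^T *m L) *m z) z <= dotv (Kmat *m z) z.
  by rewrite -scalemxAl dotvZl; exact: Kmat_dotv_ge.
have := spd_dotv_invmx_le (spdZ epsc_gt0 Kb_spd) dom.
rewrite (invmxZ (spd_unitmx (spdZ epsc_gt0 Kb_spd))) invf_div => inv_le.
rewrite !mxtrace_dotv mulr_sumr.
by apply: ler_sum => i _; rewrite (le_trans (inv_le _)) // -scalemxAl dotvZl.
Qed.

End RegularizedMatrix.

Local Open Scope classical_set_scope.

Lemma measurable_inv (R : realType) : measurable_fun [set: R] (@GRing.inv R).
Proof.
have -> : @GRing.inv R = fun x => if x == 0 then 0 else x^-1.
  by apply/funext => x; case: eqP => // ->; rewrite invr0.
apply: measurable_fun_if => //.
  by apply: measurable_realfun.measurable_fun_eqr => //; exact: measurable_cst.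
have -> : [set: R] `&` (fun x : R => x == 0) @^-1` [set false] = [set x | x != 0].
  by apply/seteqP; split => x /=; [case => _ /negbT | move=> /negbTE x0; split].
apply: measurable_realfun.open_continuous_measurable_fun; first exact: open_neq.
by move=> x; rewrite inE => /= x_neq0; exact: inv_continuous.
Qed.

Section MeasurableMatrices.
Context d (T : measurableType d) (R : realType).

Definition measurable_mxfun m l (M : T -> 'M[R]_(m, l)) :=
  forall i j, measurable_fun [set: T] (fun t => M t i j).

Lemma measurable_mxfun_cst m l (A : 'M[R]_(m, l)) : measurable_mxfun (fun _ => A).
Proof. by move=> i j; exact: measurable_cst. Qed.

Lemma measurable_mxfunD m l (M N : T -> 'M[R]_(m, l)) :
  measurable_mxfun M -> measurable_mxfun N -> measurable_mxfun (fun t => M t + N t).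
Proof.
move=> mM mN i j; under eq_fun do rewrite mxE.
exact: measurable_realfun.measurable_funD.
Qed.

Lemma measurable_mxfunM m l p (M : T -> 'M[R]_(m, l)) (N : T -> 'M[R]_(l, p)) :
  measurable_mxfun M -> measurable_mxfun N -> measurable_mxfun (fun t => M t *m N t).
Proof.
move=> mM mN i j; under eq_fun do rewrite mxE.
by apply: measurable_sum => k; exact: measurable_realfun.measurable_funM.
Qed.

Lemma measurable_mxfunZ m l (c : R) (M : T -> 'M[R]_(m, l)) :
  measurable_mxfun M -> measurable_mxfun (fun t => c *: M t).
Proof.
move=> mM i j; under eq_fun do rewrite mxE.
exact: measurable_realfun.measurable_funM (measurable_cst _) (mM i j).
Qed.

Lemma measurable_det k (M : T -> 'M[R]_k) :
  measurable_mxfun M -> measurable_fun [set: T] (fun t => \det (M t)).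
Proof.
move=> mM; apply: measurable_sum => s.
apply: measurable_realfun.measurable_funM; first exact: measurable_cst.
by apply: measurable_prod => i _; exact: mM.
Qed.

Lemma measurable_mxfun_adj k (M : T -> 'M[R]_k) :
  measurable_mxfun M -> measurable_mxfun (fun t => \adj (M t)).
Proof.
move=> mM i j; under eq_fun do rewrite mxE.
apply: measurable_realfun.measurable_funM; first exact: measurable_cst.
by apply: measurable_det => a b; under eq_fun do rewrite !mxE; exact: mM.
Qed.

Lemma measurable_mxfun_invmx k (M : T -> 'M[R]_k) :
  measurable_mxfun M -> (forall t, M t \in unitmx) ->
  measurable_mxfun (fun t => invmx (M t)).
Proof.
move=> mM M_unit.
have -> : (fun t => invmx (M t)) = fun t => (\det (M t))^-1 *: \adj (M t).
  by apply/funext => t; rewrite /invmx M_unit.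
move=> i j; under eq_fun do rewrite mxE.
apply: measurable_realfun.measurable_funM; last exact: measurable_mxfun_adj.
by apply: measurableT_comp; [exact: measurable_inv | exact: measurable_det].
Qed.

Lemma measurable_frob m l (M : T -> 'M[R]_(m, l)) :
  measurable_mxfun M -> measurable_fun [set: T] (fun t => frob (M t)).
Proof.
move=> mM; rewrite /frob; apply: measurableT_comp.
  exact: measurable_realfun.continuous_measurable_fun (@sqrt_continuous R).
apply: measurable_sum => i; apply: measurable_sum => j.
exact: measurable_realfun.measurable_funX.
Qed.

Lemma integrable_bounded_exprn (P : probability T R) (f : T -> R) (C : R) p :
  measurable_fun [set: T] f -> (forall t, 0 <= f t) -> (forall t, f t <= C) ->
  P.-integrable [set: T] (fun t => (f t ^+ p)%:E).
Proof.
move=> mf f_ge0 f_le; apply: (measurable_bounded_integrable _ _ (f := fun t => f t ^+ p)).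
- exact: measurableT.
- by apply: (@le_lt_trans _ _ 1%E); [exact: probability_le1 | exact: ltey].
- exact: measurable_realfun.measurable_funX.
exists (C ^+ p); split; first exact: num_real.
move=> M CM t _ /=; rewrite ger0_norm ?exprn_ge0 //.
by apply: le_trans (ltW CM); rewrite lerXn2r // nnegrE // (le_trans (f_ge0 t)).
Qed.

End MeasurableMatrices.

Lemma sqrtr_nat_ge1 (R : realType) n : (1 <= n)%N -> 1 <= Num.sqrt n%:R :> R.
Proof. by move=> n_ge1; rewrite -[leLHS]sqrtr1 ler_sqrt ?ler0n ?ler1n. Qed.

Section RandomField.
Variables (R : realType) (d n : nat) (D : set 'rV[R]_d).
Variables (dT : measure_display) (T : measurableType dT) (P : probability T R).
Variables (Kbar L : 'rV[R]_d -> 'M[R]_n) (k0 k1t eps : R).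
Variable K0 : 'rV[R]_d -> T -> 'M[R]_n.
Hypothesis n_ge1 : (1 <= n)%N.
Hypothesis k0_gt0 : 0 < k0.
Hypothesis k0_lt_k1t : k0 < k1t.
Hypothesis Kbar_bnd : forall x (z : 'cV[R]_n), D x ->
  k0 * norm2sq z <= dotv (Kbar x *m z) z /\
  dotv (Kbar x *m z) z <= (Num.sqrt n%:R)^-1 * k1t * norm2sq z.
Hypothesis KbarE : forall x, D x -> Kbar x = (L x)^T *m L x.
Hypothesis Kbar_spd : forall x, D x -> spd (Kbar x).
Hypothesis eps_gt0 : 0 < eps.
Hypothesis K0_rf : random_field_spd D K0.

Let K := Kfield eps L K0.
Let opeps_gt0 : 0 < 1 + eps. Proof. by rewrite addr_gt0. Qed.

Lemma mxtrace_Kbar_le x : D x -> \tr (Kbar x) <= n%:R * k1t.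
Proof.
move=> Dx; apply: le_trans (mxtrace_le (fun z => proj2 (Kbar_bnd z Dx))) _.
rewrite mulrA ler_wpM2r ?(ltW (lt_trans k0_gt0 k0_lt_k1t)) //.
by rewrite ger_pMr ?ltr0n // invf_le1 ?(lt_le_trans ltr01) ?sqrtr_nat_ge1.
Qed.

Lemma frob_Kfield_le x th : D x ->
  frob (K x th) <= n%:R * k1t / (1 + eps) * (Num.sqrt n%:R * eps + frob (K0 x th)).
Proof.
move=> Dx; apply: le_trans (frob_Kmat_le (L x) (K0 x th) eps_gt0) _.
have X_ge0 : 0 <= Num.sqrt n%:R * eps + frob (K0 x th).
  by rewrite addr_ge0 ?frob_ge0 // mulr_ge0 ?sqrtr_ge0 // ltW.
rewrite -KbarE // mulrC mulrAC ler_wpM2r // ler_wpM2r ?invr_ge0 ?(ltW opeps_gt0) //.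
exact: mxtrace_Kbar_le.
Qed.

Lemma Kfield_dotv_ge z x th : D x ->
  k0 * eps / (1 + eps) * norm2sq z <= dotv (K x th *m z) z.
Proof.
move=> Dx; apply: le_trans (Kmat_dotv_ge _ eps_gt0 ((K0_rf Dx).2 th) z).
have -> : k0 * eps / (1 + eps) * norm2sq z = eps / (1 + eps) * (k0 * norm2sq z).
  by ring.
rewrite -KbarE // ler_wpM2l ?divr_ge0 ?(ltW eps_gt0) ?(ltW opeps_gt0) //.
exact: (proj1 (Kbar_bnd z Dx)).
Qed.

Lemma Kfield_spd x th : D x -> spd (K x th).
Proof.
move=> Dx; have := Kbar_spd Dx; rewrite KbarE //.
exact: Kmat_spd eps_gt0 ((K0_rf Dx).2 th).
Qed.

Lemma frob_invmx_Kfield_le x th : D x ->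
  frob (invmx (K x th)) <= Num.sqrt n%:R * (1 + eps) / eps * \tr (invmx (Kbar x)).
Proof.
move=> Dx; have Kb_spd := Kbar_spd Dx; rewrite KbarE // in Kb_spd *.
apply: le_trans (spd_frob_le_trace (spd_invmx (Kfield_spd th Dx))) _.
apply: le_trans (mxtrace_invmx_Kmat_le eps_gt0 ((K0_rf Dx).2 th) Kb_spd) _.
have trinv_ge0 := spd_mxtrace_ge0 (spd_invmx Kb_spd).
rewrite -!mulrA ler_peMl ?sqrtr_nat_ge1 //.
by rewrite (mulr_ge0 (ltW opeps_gt0)) // mulr_ge0 // invr_ge0 ltW.
Qed.

Lemma measurable_mxfun_Kfield x : D x -> measurable_mxfun (K x).
Proof.
move=> Dx; apply/measurable_mxfunZ/measurable_mxfunM; last exact: measurable_mxfun_cst.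
apply: measurable_mxfunM; first exact: measurable_mxfun_cst.
by apply: measurable_mxfunD; [exact: measurable_mxfun_cst | exact: (K0_rf Dx).1].
Qed.

Lemma integrable_frob_invmx_Kfield p x : D x ->
  P.-integrable setT (fun th => (frob (invmx (K x th)) ^+ p)%:E).
Proof.
move=> Dx; apply: integrable_bounded_exprn (fun th => frob_ge0 _)
  (fun th => frob_invmx_Kfield_le th Dx).
apply/measurable_frob/measurable_mxfun_invmx; first exact: measurable_mxfun_Kfield.
by move=> th; exact/spd_unitmx/Kfield_spd.
Qed.

End RandomField.

Unset Implicit Arguments.

Theorem lemma1 (R : realType) (d n : nat) (D : set 'rV[R]_d)
  (dT : measure_display) (T : measurableType dT) (P : probability T R)
  (Kbar L : 'rV[R]_d -> 'M[R]_n) (k0 k1t eps : R)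
  (K0 : 'rV[R]_d -> T -> 'M[R]_n) :
  (1 <= d)%N -> (1 <= n)%N ->
  open D -> bounded_set D ->
  (forall x, D x -> spd (Kbar x)) ->
  0 < k0 -> k0 < k1t ->
  (forall x (z : 'cV[R]_n), D x ->
     k0 * norm2sq z <= dotv (Kbar x *m z) z /\
     dotv (Kbar x *m z) z <= (Num.sqrt (n%:R))^-1 * k1t * norm2sq z) ->
  (forall x, D x ->
     upper_trig (L x) /\ (forall i, 0 < L x i i) /\ Kbar x = (L x)^T *m L x) ->
  0 < eps ->
  random_field_spd D K0 ->
  let k1 := n%:R * k1t in
  let K := Kfield eps L K0 in
  (* (i) *)
  (forall x, D x ->
     {ae P, forall th, frob (K x th) <=
        k1 / (1 + eps) * (Num.sqrt (n%:R) * eps + frob (K0 x th))}) /\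
  (* (ii) *)
  (let keps := k0 * eps / (1 + eps) in
   0 < keps /\
   forall (z : 'cV[R]_n) x, D x ->
     {ae P, forall th, keps * norm2sq z <= dotv (K x th *m z) z}) /\
  (* (iii) *)
  (forall x, D x ->
     {ae P, forall th, frob (invmx (K x th)) <=
        Num.sqrt (n%:R) * (1 + eps) / eps * \tr (invmx (Kbar x))}) /\
  (forall (p : nat) x, (1 <= p)%N -> D x ->
     P.-integrable setT (fun th => ((frob (invmx (K x th))) ^+ p)%:E)).
Proof.
move=> _ n_ge1 _ _ Kbar_spd k0_gt0 k0_lt_k1t Kbar_bnd L_chol eps_gt0 K0_rf k1 K.
have KbarE x : D x -> Kbar x = (L x)^T *m L x by case/L_chol=> _ [].
split; [|split; [|split]].
- move=> x Dx; apply: aeW => th.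
  exact (frob_Kfield_le K0 n_ge1 k0_gt0 k0_lt_k1t Kbar_bnd KbarE eps_gt0 th Dx).
- split=> [|z x Dx]; first by rewrite divr_gt0 ?mulr_gt0 ?addr_gt0.
  by apply: aeW => th; exact (Kfield_dotv_ge Kbar_bnd KbarE eps_gt0 K0_rf z th Dx).
- move=> x Dx; apply: aeW => th.
  exact (frob_invmx_Kfield_le n_ge1 KbarE Kbar_spd eps_gt0 K0_rf th Dx).
move=> p x _ Dx.
exact (integrable_frob_invmx_Kfield P n_ge1 KbarE Kbar_spd eps_gt0 K0_rf p Dx).
Qed.
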